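(* Let $q$ be a prime power, $0<r\leq m$, $g_1,\dots,g_r\in\mathbb{F}_{q^m}$, and let $\mathcal{A}\subseteq\langle g_1,\dots,g_r\rangle_{\mathbb{F}_q}$ be a subset containing an $\mathbb{F}_q$-linear subspace of dimension at least $d$, where $d\leq r$. Let $t\ge 1$ and let $(e_1,\dots,e_t)$ be drawn uniformly at random among $t$-tuples of $\mathbb{F}_q$-linearly independent elements of $\mathbb{F}_{q^m}$. Then the probability that there exists $\mathbf{a}=(a_1,\dots,a_t)\in\mathcal{A}^t\setminus\{\mathbf{0}\}$ with $\sum_{j=1}^t a_je_j=0$ is at most \[ \frac{q^{tr+1}-(q^d-1)(q^t-1)}{q^{m+1}-q^t}. \]
   Context: $\langle g_1,\dots,g_r\rangle_{\mathbb{F}_q}$ denotes the $\mathbb{F}_q$-linear span of $g_1,\dots,g_r$ in $\mathbb{F}_{q^m}$. *)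

From HB Require Import structures.
From mathcomp Require Import all_boot all_order all_algebra all_field.
Set Implicit Arguments. Unset Strict Implicit. Unset Printing Implicit Defensive.
Import Order.TTheory GRing.Theory Num.Theory.
Local Open Scope ring_scope.

(* Setting: F = F_q a finite field, L = F_{q^m} a finite-dimensional field
   extension of F (m = \dim {:L}); [finvect_type L] is L with its canonical
   finType structure, so that tuples over it can be counted. *)

Definition indep_tuples (F : finFieldType) (L : fieldExtType F) (t : nat)
  : {set t.-tuple (finvect_type L)} :=
  [set e : t.-tuple (finvect_type L) | free e].

Definition bad_event (F : finFieldType) (L : fieldExtType F) (t : nat)
  (A : {set finvect_type L}) (e : t.-tuple (finvect_type L)) : bool :=
  [exists a : t.-tuple (finvect_type L),
     [&& all (fun x => x \in A) a, a != [tuple of nseq t 0]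
       & \sum_(j < t) tnth a j * tnth e j == 0]].

Definition bad_prob (F : finFieldType) (L : fieldExtType F) (t : nat)
  (A : {set finvect_type L}) : rat :=
  (#|[set e in indep_tuples L t | bad_event A e]|%:R / #|indep_tuples L t|%:R)%R.

From mathcomp Require Import all_boot all_order all_algebra all_field.
From mathcomp Require Import ring.
Import Order.TTheory GRing.Theory Num.Theory.
Local Open Scope ring_scope.
Set Implicit Arguments. Unset Strict Implicit. Unset Printing Implicit Defensive.

(* Fix a coefficient tuple a with a_i <> 0. Changing e_i to any of the
   q^m - q^(t-1) vectors outside the span of the other entries keeps e free,
   and when sum_j a_j e_j = 0 the old e_i is recovered from the other entries
   because a_i <> 0; hence at most a fraction 1 / (q^m - q^(t-1)) of the
   free tuples are annihilated by a. A union bound over a in <<g>>^t finishes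
   the proof, once one discards the (q^d - 1) q^(t-1) tuples
   (v, c_2 v, ..., c_t v) with 0 <> v in V: for those,
   sum_j a_j e_j = v * sum_j c_j e_j never vanishes on a free e. This gives
   the sharper bound (q^(tr) - (q^d - 1) q^(t-1)) / (q^m - q^(t-1)). *)

Section TupleUpdate.
Variables (T : Type) (t : nat).
Implicit Types (e : t.-tuple T) (i : 'I_t).

Definition set_tnth e i (x : T) : t.-tuple T :=
  [tuple if j == i then x else tnth e j | j < t].

Definition rem_tnth e i : seq T := [seq tnth e j | j <- rem i (enum 'I_t)].

Lemma tnth_set_tnth e i x j :
  tnth (set_tnth e i x) j = if j == i then x else tnth e j.
Proof. by rewrite tnth_mktuple. Qed.

Lemma rem_tnth_set_tnth e i x : rem_tnth (set_tnth e i x) i = rem_tnth e i.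
Proof.
apply/eq_in_map => j; rewrite mem_rem_uniq ?enum_uniq // inE => /andP[ji _].
by rewrite tnth_set_tnth (negPf ji).
Qed.

Lemma size_rem_tnth e i : size (rem_tnth e i) = t.-1.
Proof. by rewrite size_map size_rem ?mem_enum // size_enum_ord. Qed.

Lemma set_tnth_inj e e' i x x' : set_tnth e i x = set_tnth e' i x' ->
  x = x' /\ forall j, j != i -> tnth e j = tnth e' j.
Proof.
move=> ee'; split=> [|j ji].
  by have := congr1 (fun u => tnth u i) ee'; rewrite !tnth_set_tnth eqxx.
by have := congr1 (fun u => tnth u j) ee'; rewrite !tnth_set_tnth (negPf ji).
Qed.

End TupleUpdate.

Lemma perm_rem_tnth (T : eqType) t (e : t.-tuple T) i :
  perm_eq e (tnth e i :: rem_tnth e i).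
Proof.
rewrite -{1}(map_tnth_enum e) /rem_tnth -map_cons.
by apply: perm_map; apply: perm_to_rem; rewrite mem_enum.
Qed.

Lemma tnth_neq_nseq (T : eqType) t (a : t.-tuple T) x :
  a != [tuple of nseq t x] -> exists i, tnth a i != x.
Proof.
move=> ax; apply/existsP; rewrite -negb_forall; apply: contra ax => /forallP ax.
by apply/eqP/eq_from_tnth => j; rewrite tnth_nseq; apply/eqP.
Qed.

Lemma leq_card_bigcup (I T : finType) (P : {set I}) (B : I -> {set T}) :
  (#|\bigcup_(i in P) B i| <= \sum_(i in P) #|B i|)%N.
Proof.
apply: (big_rec2 (fun (U : {set T}) n => #|U| <= n)%N); first by rewrite cards0.
by move=> i U n _ IH; rewrite (leq_trans (leq_card_setU _ _).1) ?leq_add2l.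
Qed.

Lemma card_tuples_in (T : finType) (X : {pred T}) t :
  #|[set a : t.-tuple T | all (fun x => x \in X) a]| = (#|X| ^ t)%N.
Proof.
rewrite -[t in (_ ^ t)%N]card_ord -card_ffun_on.
rewrite -(card_in_imset (f := fun f : {ffun 'I_t -> T} => [tuple f j | j < t])).
  congr #|pred_of_set _|; apply/setP => a; rewrite inE; apply/allP/imsetP.
    move=> aX; exists [ffun j => tnth a j].
      by apply/ffun_onP => j; rewrite ffunE; apply/aX/mem_tnth.
    by apply: eq_from_tnth => j; rewrite tnth_mktuple ffunE.
  move=> [f /ffun_onP fX ->] x /tnthP[j ->]; rewrite tnth_mktuple; exact: fX.
move=> f f' _ _ ff'; apply/ffunP => j.
by have := congr1 (fun u => tnth u j) ff'; rewrite !tnth_mktuple.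
Qed.

Lemma free_rem_tnth (K : fieldType) (vT : vectType K) t (e : t.-tuple vT) i :
  free e = (tnth e i \notin <<rem_tnth e i>>%VS) && free (rem_tnth e i).
Proof. by rewrite (perm_free (perm_rem_tnth e i)) free_cons. Qed.

Section FreeTupleCount.
Variables (F : finFieldType) (vT : vectType F).
Local Notation fT := (finvect_type vT).

Lemma card_finvect : #|fT| = (#|F| ^ \dim {:fT})%N.
Proof. by rewrite -card_vspace card_vspacef. Qed.

Lemma card_free_set_tnth t (e : t.-tuple fT) i : free e ->
  #|[set y | free (set_tnth e i y)]| = (#|F| ^ \dim {:fT} - #|F| ^ t.-1)%N.
Proof.
rewrite (free_rem_tnth e i) => /andP[_ free_rem].
pose span_rem := [set y : fT | y \in <<rem_tnth e i>>%VS].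
have -> : [set y | free (set_tnth e i y)] = ~: span_rem.
  apply/setP => y.
  by rewrite !inE (free_rem_tnth _ i) rem_tnth_set_tnth tnth_set_tnth eqxx free_rem andbT.
have card_span : #|span_rem| = (#|F| ^ t.-1)%N.
  by rewrite cardsE card_vspace (eqP free_rem) size_rem_tnth.
by rewrite -card_finvect -(cardsC span_rem) card_span addKn.
Qed.

End FreeTupleCount.

Section ZeroCombinations.
Variables (F : finFieldType) (L : fieldExtType F).
Local Notation LT := (finvect_type L).
Local Notation q := #|F|.
Local Notation m := (\dim {:LT}).

Definition zero_comb_tuples t (a : t.-tuple LT) : {set t.-tuple LT} :=
  [set e in indep_tuples L t | \sum_(j < t) tnth a j * tnth e j == 0].

Lemma eq_from_zero_comb t (a e e' : t.-tuple LT) i : tnth a i != 0 ->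
  \sum_(j < t) tnth a j * tnth e j = 0 -> \sum_(j < t) tnth a j * tnth e' j = 0 ->
  (forall j, j != i -> tnth e j = tnth e' j) -> e = e'.
Proof.
move=> ai0 se se' ee'; apply: eq_from_tnth => j.
have [->|] := eqVneq j i; last exact: ee'.
have sum_split u : \sum_(j < t) tnth a j * tnth u j =
    tnth a i * tnth u i + \sum_(j < t | j != i) tnth a j * tnth u j.
  by rewrite (bigD1 i).
apply: (mulfI ai0); apply: (addIr (\sum_(j < t | j != i) tnth a j * tnth e j)).
rewrite -sum_split se (eq_bigr (fun j => tnth a j * tnth e' j)) => [|k /ee' -> //].
by rewrite -sum_split se'.
Qed.

Lemma card_zero_comb_tuples t (a : t.-tuple LT) i : tnth a i != 0 ->
  (#|zero_comb_tuples a| * (q ^ m - q ^ t.-1) <= #|indep_tuples L t|)%N.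
Proof.
move=> ai0.
pose D := [set p : t.-tuple LT * LT |
            (p.1 \in zero_comb_tuples a) && free (set_tnth p.1 i p.2)].
have card_D : #|D| = (#|zero_comb_tuples a| * (q ^ m - q ^ t.-1))%N.
  rewrite -sum_nat_const.
  transitivity (\sum_(e in zero_comb_tuples a)
                  \sum_(y in [set y | free (set_tnth e i y)]) 1)%N.
    by rewrite -sum1_card pair_big_dep; apply: eq_bigl => -[e y]; rewrite !inE.
  apply: eq_bigr => e; rewrite !inE => /andP[free_e _].
  by rewrite sum1_card card_free_set_tnth.
have inj_D : {in D &, injective (fun p => set_tnth p.1 i p.2)}.
  move=> [e y] [e' y']; rewrite !inE /= => /andP[/andP[_ se] _] /andP[/andP[_ se'] _].
  move=> /(@set_tnth_inj _ _ e e' i y y')[-> ee']; congr (_, _).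
  exact: eq_from_zero_comb ai0 (eqP se) (eqP se') ee'.
rewrite -card_D -(card_in_imset inj_D); apply/subset_leq_card/subsetP.
by move=> u /imsetP[p]; rewrite inE => /andP[_ free_p] ->; rewrite inE.
Qed.

Definition multiple_tuples n (V : {vspace LT}) : {set n.+1.-tuple LT} :=
  [set map_tuple (fun x => x *: p.1) (cons_tuple 1 p.2)
     | p in setX ([set v : LT | v \in V] :\ 0) [set: n.-tuple F]].

Lemma card_multiple_tuples n V :
  #|multiple_tuples n V| = ((q ^ \dim V - 1) * q ^ n)%N.
Proof.
rewrite card_in_imset.
  rewrite cardsX cardsT card_tuple.
  have := cardsD1 (0 : LT) [set v : LT | v \in V].
  by rewrite inE mem0v cardsE card_vspace add1n subn1 => ->.
move=> [v c] [v' c']; rewrite !inE /= => /andP[/andP[v0 _] _] _.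
move/(congr1 val) => /= [].
rewrite !scale1r => <- /(inj_map _) cc'; congr (_, _); apply/val_inj/cc'.
move=> x y /eqP; rewrite -subr_eq0 -scalerBl scaler_eq0 (negPf v0) orbF.
by rewrite subr_eq0 => /eqP.
Qed.

Lemma multiple_tuples_in n V a :
  a \in multiple_tuples n V -> all (fun x => x \in V) a.
Proof.
case/imsetP => -[v c]; rewrite !inE /= => /andP[/andP[_ vV] _] ->.
by apply/allP => _ /mapP[x _ ->]; apply: memvZ.
Qed.

Lemma comb_multiple_tuples_neq0 n V (a e : n.+1.-tuple LT) :
  a \in multiple_tuples n V -> free e -> \sum_(j < n.+1) tnth a j * tnth e j != 0.
Proof.
case/imsetP => -[v c]; rewrite !inE /= => /andP[/andP[v0 _] _] -> /freeP free_e.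
under eq_bigr => j _ do rewrite tnth_map -scalerAl scalerAr.
rewrite -mulr_sumr mulf_neq0 //; apply/eqP => comb0.
suff /(_ ord0)/eqP : forall j, tnth (cons_tuple 1 c) j = 0.
  by rewrite (tnth_nth 0) oner_eq0.
apply: free_e; apply: etrans _ comb0.
by apply: eq_bigr => j _; rewrite [tnth e j](tnth_nth 0).
Qed.

End ZeroCombinations.

Section BadEvent.
Variables (F : finFieldType) (L : fieldExtType F) (n : nat).
Local Notation LT := (finvect_type L).
Local Notation q := #|F|.
Local Notation m := (\dim {:LT}).
Variables (A : {set LT}) (V W : {vspace LT}).
Hypotheses (sAW : forall x, x \in A -> x \in W) (sVA : forall x, x \in V -> x \in A).

Definition candidate_coeffs : {set n.+1.-tuple LT} :=
  ([set a : n.+1.-tuple LT | all (fun x => x \in W) a] :\: multiple_tuples n V)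
    :\ [tuple of nseq n.+1 0].

Lemma bad_sub_zero_comb :
  [set e in indep_tuples L n.+1 | bad_event A e]
    \subset \bigcup_(a in candidate_coeffs) zero_comb_tuples a.
Proof.
apply/subsetP => e; rewrite !inE => /andP[free_e /existsP[a /and3P[aA a0 comb0]]].
apply/bigcupP; exists a; last by rewrite !inE free_e.
rewrite !inE a0 /=; apply/andP; split; last by apply/allP => x /(allP aA)/sAW.
by apply: contraL comb0 => /comb_multiple_tuples_neq0/(_ free_e).
Qed.

Lemma card_candidate_coeffs :
  (#|candidate_coeffs| + (q ^ \dim V - 1) * q ^ n <= q ^ (n.+1 * \dim W))%N.
Proof.
pose TW := [set a : n.+1.-tuple LT | all (fun x => x \in W) a].
have sMW : multiple_tuples n V \subset TW.
  apply/subsetP => a /multiple_tuples_in aV; rewrite inE.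
  by apply/allP => x /(allP aV)/sVA/sAW.
rewrite -card_multiple_tuples mulnC expnM -card_vspace -card_tuples_in -/TW.
rewrite -(cardsID (multiple_tuples n V) TW) (setIidPr sMW) addnC leq_add2l.
exact/subset_leq_card/subD1set.
Qed.

Lemma card_bad_le :
  (#|[set e in indep_tuples L n.+1 | bad_event A e]| * (q ^ m - q ^ n)
     <= #|candidate_coeffs| * #|indep_tuples L n.+1|)%N.
Proof.
have union_bound :=
  leq_trans (subset_leq_card bad_sub_zero_comb) (leq_card_bigcup _ _).
rewrite (leq_trans (leq_mul union_bound (leqnn _))) // big_distrl -sum_nat_const.
apply: leq_sum => a; rewrite !inE => /andP[a0 _].
by have [i ai0] := tnth_neq_nseq a0; apply: card_zero_comb_tuples ai0.
Qed.

Lemma bad_prob_le : (n < m)%N ->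
  bad_prob n.+1 A <= (q%:R ^+ (n.+1 * \dim W) - (q%:R ^+ \dim V - 1) * q%:R ^+ n)
                      / (q%:R ^+ m - q%:R ^+ n).
Proof.
move=> n_lt_m; rewrite /bad_prob.
have q_gt1 : (1 < q)%N := card_finNzRing_gt1 F.
have qn_lt_qm : (q ^ n < q ^ m)%N by rewrite ltn_exp2l.
have den_gt0 : (0 : rat) < q%:R ^+ m - q%:R ^+ n by rewrite subr_gt0 -!natrX ltr_nat.
have card_cands : #|candidate_coeffs|%:R <=
    q%:R ^+ (n.+1 * \dim W) - (q%:R ^+ \dim V - 1) * q%:R ^+ n :> rat.
  rewrite lerBrDr; move: card_candidate_coeffs.
  by rewrite -(ler_nat rat) natrD natrM natrB ?expn_gt0 ?(ltnW q_gt1) // !natrX.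
have inv_den_ge0 : 0 <= (q%:R ^+ m - q%:R ^+ n)^-1 :> rat by rewrite invr_ge0 ltW.
apply: le_trans _ (ler_wpM2r inv_den_ge0 card_cands).
have [->|N_gt0] := posnP #|indep_tuples L n.+1|.
  by rewrite invr0 mulr0 divr_ge0 ?ler0n ?(ltW den_gt0).
rewrite ler_pdivrMr ?ltr0n // mulrAC ler_pdivlMr //.
by rewrite -!natrX -natrB ?(ltnW qn_lt_qm) // -!natrM ler_nat card_bad_le.
Qed.

End BadEvent.

Lemma ler_pdiv_scaleD (R : realFieldType) (x y k c : R) :
  0 < y -> 0 < k -> 0 <= c -> x / y <= (k * x + c) / (k * y).
Proof.
move=> y_gt0 k_gt0 c_ge0.
have -> : (k * x + c) / (k * y) = x / y + c / (k * y).
  by field; rewrite !gt_eqF.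
by rewrite lerDl divr_ge0 // ltW // mulr_gt0.
Qed.

Theorem lemma1 (F : finFieldType) (L : fieldExtType F) (r d t : nat)
  (g : r.-tuple (finvect_type L)) (A : {set finvect_type L})
  (V : {vspace finvect_type L}) :
  let q := #|F| in
  let m := \dim {:finvect_type L} in
  (0 < r)%N -> (r <= m)%N ->
  (forall x, x \in A -> x \in <<g>>%VS) ->
  (forall x, x \in V -> x \in A) ->
  (d <= \dim V)%N -> (d <= r)%N ->
  (1 <= t)%N -> (t <= m)%N ->
  bad_prob t A <=
    ((q%:Q ^+ (t * r + 1) - (q%:Q ^+ d - 1) * (q%:Q ^+ t - 1))
      / (q%:Q ^+ m.+1 - q%:Q ^+ t)).
Proof.
move=> q m _ _ sAg sVA d_le_V _ t_gt0 t_le_m.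
case: t t_gt0 t_le_m => // n _ n_lt_m; rewrite -!pmulrn.
apply: le_trans (bad_prob_le sAg sVA n_lt_m) _.
set Q : rat := q%:R.
have Q_gt1 : 1 < Q by rewrite ltr1n card_finNzRing_gt1.
have den_gt0 : 0 < Q ^+ m - Q ^+ n by rewrite subr_gt0 ltr_eXn2l.
have Qd_ge1 : 1 <= Q ^+ d by rewrite exprn_ege1 // ltW.
apply: (@le_trans _ _
  ((Q ^+ (n.+1 * r) - (Q ^+ d - 1) * Q ^+ n) / (Q ^+ m - Q ^+ n))).
  rewrite ler_wpM2r ?invr_ge0 ?(ltW den_gt0) //; apply: lerB.
    by rewrite ler_eXn2l // leq_mul2l (leq_trans (dim_span g)) ?size_tuple ?orbT.
  by rewrite ler_wpM2r ?exprn_ge0 ?ler0n // lerB // ler_eXn2l.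
have -> : Q ^+ (n.+1 * r + 1) - (Q ^+ d - 1) * (Q ^+ n.+1 - 1) =
    Q * (Q ^+ (n.+1 * r) - (Q ^+ d - 1) * Q ^+ n) + (Q ^+ d - 1).
  by rewrite addn1 !exprS; ring.
rewrite !exprS -mulrBr ler_pdiv_scaleD // ?subr_ge0 //.
exact: lt_trans ltr01 Q_gt1.
Qed.
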